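(* Let $p_k\ge0$ ($k\ge1$) with $\sum_k p_k=1$ and $Q_1=\sum_k kp_k<\infty$, let $Q(z)=\sum_k p_kz^k$, and for $q\in(0,1)$ define $\kappa(q)>0$ by $$-\log\kappa(q)=\int_0^{1-q}\Big(\frac{Q_1}{1-Q(z)}-\frac{1}{1-z}\Big)\,dz.$$ Then $\kappa(q)\to0$ as $q\to0$ if and only if $\sum_{k=1}^\infty p_k\,k\log k=\infty$. *)

From Stdlib Require Import Reals.
From Coquelicot Require Import Coquelicot.
Open Scope R_scope.

(* The offspring distribution is p_k, k >= 1, given by p : nat -> R;
   the value p 0 is never used: all sums range over k >= 1,
   written as sums over n >= 0 of the term at k = S n. *)

Definition Qgf (p : nat -> R) (z : R) : R :=
  Series (fun n => p (S n) * z ^ (S n)).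

Definition Q1 (p : nat -> R) : R :=
  Series (fun n => INR (S n) * p (S n)).

Definition kappa (p : nat -> R) (q : R) : R :=
  exp (- RInt (fun z => Q1 p / (1 - Qgf p z) - 1 / (1 - z)) 0 (1 - q)).

From Stdlib Require Import Reals Lra Lia.
From Coquelicot Require Import Coquelicot.
Open Scope R_scope.

(* The integrand equals ((1 - z) Q1 - (1 - Q(z))) / ((1 - Q(z)) (1 - z)), and its numerator is
   sum_k p_k (1 - z)^2 G_k(z), where G_k(z) = sum_{j<k} sum_{i<j} z^i has nonnegative coefficients.
   Since 1 - z <= 1 - Q(z) <= Q1 (1 - z), the integrand lies between sum_k p_k G_k(z) / Q1 and
   sum_k p_k G_k(z); truncating the sum costs at most (sum of the omitted k p_k) / (1 - z).
   Finally int_0^1 G_k = k H_k - k = k log k + O(k) and int_0^x G_k >= x^k int_0^1 G_k, so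
   -log kappa(q) stays bounded as q -> 0 exactly when sum_k p_k k log k converges. *)

Lemma ln_le_sub_1 y : 0 < y -> ln y <= y - 1.
Proof.
  intro y_pos. rewrite <- (ln_exp (y - 1)).
  apply ln_le; [exact y_pos |]. generalize (exp_ineq1_le (y - 1)). lra.
Qed.

Lemma pow_le_1 x n : 0 <= x <= 1 -> x ^ n <= 1.
Proof. intro Hx. rewrite <- (pow1 n). apply pow_incr. exact Hx. Qed.

Lemma pow_le_pow_of_le_1 x m n : 0 <= x <= 1 -> (m <= n)%nat -> x ^ n <= x ^ m.
Proof.
  intros Hx Hmn. replace n with (m + (n - m))%nat by lia. rewrite pow_add.
  generalize (pow_le x m (proj1 Hx)) (pow_le_1 x (n - m) Hx). nra.
Qed.

Lemma bernoulli_sub q n : 0 <= q <= 1 -> 1 - INR n * q <= (1 - q) ^ n.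
Proof.
  intro Hq. induction n as [|n IHn]; [simpl; lra |]. rewrite S_INR. simpl pow.
  generalize (pos_INR n) (pow_le (1 - q) n ltac:(lra)). nra.
Qed.

Fixpoint harmonic (k : nat) : R :=
  match k with O => 0 | S j => harmonic j + / INR (S j) end.

Lemma ln_succ_le_harmonic k : ln (INR (S k)) <= harmonic k.
Proof.
  induction k as [|k IHk]; [simpl; rewrite ln_1; lra | cbn [harmonic]].
  rewrite (S_INR (S k)). set (a := INR (S k)) in *.
  assert (a_pos : 0 < a) by apply lt_0_INR, Nat.lt_0_succ.
  replace (a + 1) with (a * ((a + 1) / a)) by (field; lra).
  rewrite ln_mult by (try apply Rdiv_lt_0_compat; lra).
  generalize (ln_le_sub_1 ((a + 1) / a) ltac:(apply Rdiv_lt_0_compat; lra)).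
  replace ((a + 1) / a - 1) with (/ a) by (field; lra). lra.
Qed.

Lemma harmonic_le_1_add_ln k : (1 <= k)%nat -> harmonic k <= 1 + ln (INR k).
Proof.
  induction k as [|[|k] IHk]; intro Hk; [lia | simpl; rewrite ln_1; lra |].
  specialize (IHk ltac:(lia)). cbn [harmonic] in *. rewrite (S_INR (S k)).
  set (a := INR (S k)) in *.
  assert (a_pos : 0 < a) by apply lt_0_INR, Nat.lt_0_succ.
  assert (ln_a : ln a = ln (a + 1) + ln (a / (a + 1))).
  { rewrite <- ln_mult by (try apply Rdiv_lt_0_compat; lra). f_equal. field. lra. }
  generalize (ln_le_sub_1 (a / (a + 1)) ltac:(apply Rdiv_lt_0_compat; lra)).
  replace (a / (a + 1) - 1) with (- / (a + 1)) by (field; lra). lra.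
Qed.

Fixpoint geom_sum (k : nat) (z : R) : R :=
  match k with O => 0 | S j => geom_sum j z + z ^ j end.

Fixpoint geom_sum2 (k : nat) (z : R) : R :=
  match k with O => 0 | S j => geom_sum2 j z + geom_sum j z end.

Fixpoint geom_sum_prim (k : nat) (x : R) : R :=
  match k with O => 0 | S j => geom_sum_prim j x + x ^ S j / INR (S j) end.

Fixpoint geom_sum2_prim (k : nat) (x : R) : R :=
  match k with O => 0 | S j => geom_sum2_prim j x + geom_sum_prim j x end.

Lemma geom_sum_eq k z : (1 - z) * geom_sum k z = 1 - z ^ k.
Proof.
  induction k as [|k IHk]; cbn [geom_sum pow]; [ring |].
  rewrite Rmult_plus_distr_l, IHk. ring.
Qed.

Lemma geom_sum2_eq k z : (1 - z) ^ 2 * geom_sum2 k z = INR k * (1 - z) - (1 - z ^ k).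
Proof.
  induction k as [|k IHk]; cbn [geom_sum2]; [simpl; ring |].
  rewrite S_INR, Rmult_plus_distr_l, IHk.
  replace ((1 - z) ^ 2 * geom_sum k z) with ((1 - z) * ((1 - z) * geom_sum k z)) by ring.
  rewrite geom_sum_eq. simpl. ring.
Qed.

Lemma geom_sum_ge0 k z : 0 <= z -> 0 <= geom_sum k z.
Proof.
  intro z_ge0. induction k as [|k IHk]; cbn [geom_sum]; [lra |].
  generalize (pow_le z k z_ge0). lra.
Qed.

Lemma geom_sum2_ge0 k z : 0 <= z -> 0 <= geom_sum2 k z.
Proof.
  intro z_ge0. induction k as [|k IHk]; cbn [geom_sum2]; [lra |].
  generalize (geom_sum_ge0 k z z_ge0). lra.
Qed.

Lemma is_RInt_0 a b : is_RInt (fun _ => 0) a b 0.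
Proof.
  generalize (@is_RInt_const R_NormedModule a b 0).
  unfold scal; simpl; unfold mult; simpl. rewrite Rmult_0_r. now intro.
Qed.

Lemma is_RInt_geom_sum k x : is_RInt (geom_sum k) 0 x (geom_sum_prim k x).
Proof.
  induction k as [|k IHk]; [apply is_RInt_0 |].
  replace (geom_sum_prim (S k) x)
    with (plus (geom_sum_prim k x) (x ^ S k / INR (S k) - 0 ^ S k / INR (S k)))
    by (unfold plus; cbn -[INR]; field; apply not_0_INR, Nat.neq_succ_0).
  exact (is_RInt_plus _ _ _ _ _ _ IHk (is_RInt_pow 0 x k)).
Qed.

Lemma is_RInt_geom_sum2 k x : is_RInt (geom_sum2 k) 0 x (geom_sum2_prim k x).
Proof.
  induction k as [|k IHk]; [apply is_RInt_0 |].
  exact (is_RInt_plus _ _ _ _ _ _ IHk (is_RInt_geom_sum k x)).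
Qed.

Lemma geom_sum_prim_1 k : geom_sum_prim k 1 = harmonic k.
Proof.
  induction k as [|k IHk]; cbn [geom_sum_prim harmonic]; [reflexivity |].
  rewrite IHk, pow1. unfold Rdiv. ring.
Qed.

Lemma geom_sum2_prim_1 k : geom_sum2_prim k 1 = INR k * harmonic k - INR k.
Proof.
  induction k as [|k IHk]; cbn [geom_sum2_prim harmonic]; [simpl; ring |].
  rewrite IHk, geom_sum_prim_1, S_INR.
  field. rewrite <- S_INR. apply not_0_INR, Nat.neq_succ_0.
Qed.

Lemma geom_sum2_prim_1_bounds k : (1 <= k)%nat ->
  INR k * ln (INR k) - INR k <= geom_sum2_prim k 1 <= INR k * ln (INR k).
Proof.
  intro k_ge1. rewrite geom_sum2_prim_1.
  assert (k_pos : 0 < INR k) by (apply lt_0_INR; lia).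
  assert (ln (INR k) <= ln (INR (S k))) by (apply ln_le; [exact k_pos | apply le_INR; lia]).
  assert (INR k * ln (INR k) <= INR k * harmonic k)
    by (apply Rmult_le_compat_l; generalize (ln_succ_le_harmonic k); lra).
  assert (INR k * harmonic k <= INR k * (1 + ln (INR k)))
    by (apply Rmult_le_compat_l; generalize (harmonic_le_1_add_ln k k_ge1); lra).
  lra.
Qed.

Lemma geom_sum_prim_ge0 k x : 0 <= x -> 0 <= geom_sum_prim k x.
Proof.
  intro x_ge0. induction k as [|k IHk]; cbn [geom_sum_prim]; [lra |].
  generalize (Rdiv_le_0_compat _ _ (pow_le x (S k) x_ge0) (lt_0_INR _ (Nat.lt_0_succ k))).
  lra.
Qed.

Lemma geom_sum2_prim_ge0 k x : 0 <= x -> 0 <= geom_sum2_prim k x.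
Proof.
  intro x_ge0. induction k as [|k IHk]; cbn [geom_sum2_prim]; [lra |].
  generalize (geom_sum_prim_ge0 k x x_ge0). lra.
Qed.

Lemma geom_sum_prim_bounds k x : 0 <= x <= 1 ->
  x ^ k * geom_sum_prim k 1 <= geom_sum_prim k x <= geom_sum_prim k 1.
Proof.
  intro Hx. induction k as [|k IHk]; cbn [geom_sum_prim]; [simpl; lra |].
  rewrite pow1. set (c := / INR (S k)).
  assert (c_pos : 0 < c) by apply Rinv_0_lt_compat, lt_0_INR, Nat.lt_0_succ.
  assert (x ^ S k <= x ^ k) by (apply pow_le_pow_of_le_1; [exact Hx | lia]).
  generalize (pow_le x (S k) (proj1 Hx)) (pow_le_1 x (S k) Hx)
    (geom_sum_prim_ge0 k 1 ltac:(lra)).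
  unfold Rdiv. fold c. nra.
Qed.

Lemma geom_sum2_prim_bounds k x : 0 <= x <= 1 ->
  x ^ k * geom_sum2_prim k 1 <= geom_sum2_prim k x <= geom_sum2_prim k 1.
Proof.
  intro Hx. induction k as [|k IHk]; cbn [geom_sum2_prim]; [simpl; lra |].
  assert (x ^ S k <= x ^ k) by (apply pow_le_pow_of_le_1; [exact Hx | lia]).
  generalize (pow_le x (S k) (proj1 Hx)) (geom_sum_prim_bounds k x Hx)
    (geom_sum_prim_ge0 k 1 ltac:(lra)) (geom_sum2_prim_ge0 k 1 ltac:(lra)).
  nra.
Qed.

Lemma geom_sum2_prim_klogk_bounds k m x : (1 <= k <= m)%nat -> 0 <= x <= 1 ->
  x ^ m * (INR k * ln (INR k) - INR k) <= geom_sum2_prim k x <= INR k * ln (INR k).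
Proof.
  intros Hk Hx. destruct (geom_sum2_prim_1_bounds k ltac:(lia)) as [lower upper].
  destruct (geom_sum2_prim_bounds k x Hx) as [lower_x upper_x].
  assert (x ^ m <= x ^ k) by (apply pow_le_pow_of_le_1; [exact Hx | lia]).
  generalize (pow_le x m (proj1 Hx)) (geom_sum2_prim_ge0 k 1 ltac:(lra)). nra.
Qed.

Lemma sum_n_le_is_series (a : nat -> R) l N :
  (forall n, 0 <= a n) -> is_series a l -> sum_n a N <= l.
Proof.
  intros a_ge0 Ha. apply (is_lim_seq_incr_compare _ _ Ha). intro n.
  rewrite sum_Sn. generalize (a_ge0 (S n)). unfold plus; simpl. lra.
Qed.

Lemma is_series_ge0 (a : nat -> R) l : (forall n, 0 <= a n) -> is_series a l -> 0 <= l.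
Proof.
  intros a_ge0 Ha. apply Rle_trans with (sum_n a 0).
  - rewrite sum_O. apply a_ge0.
  - exact (sum_n_le_is_series a l 0 a_ge0 Ha).
Qed.

Lemma is_series_le (a b : nat -> R) la lb :
  (forall n, a n <= b n) -> is_series a la -> is_series b lb -> la <= lb.
Proof.
  intros a_le_b Ha Hb. apply (is_lim_seq_le (sum_n a) (sum_n b) la lb); [| exact Ha | exact Hb].
  intro N. rewrite !sum_n_Reals. apply sum_Rle. intros n _. apply a_le_b.
Qed.

Lemma is_series_scal_sub (a b d : nat -> R) c la lb :
  (forall n, d n = c * a n - b n) ->
  is_series a la -> is_series b lb -> is_series d (c * la - lb).
Proof.
  intros Hd Ha Hb.
  refine (is_series_ext _ _ _ _ (is_series_minus _ _ _ _ (is_series_scal c _ _ Ha) Hb)).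
  intro n. symmetry. apply Hd.
Qed.

Lemma is_lim_seq_p_infty_of_unbounded (u : nat -> R) :
  (forall n, u n <= u (S n)) -> (forall M, exists n, M < u n) -> is_lim_seq u p_infty.
Proof.
  intros u_incr u_unbounded. apply is_lim_seq_spec. intro M.
  destruct (u_unbounded M) as [N HN]. exists N. intros n Hn.
  induction Hn as [|n Hn IHn]; [exact HN | generalize (u_incr n); lra].
Qed.

Lemma filterlim_exp_opp_locally_0 {T} (F : (T -> Prop) -> Prop) {FF : Filter F} (g : T -> R) :
  filterlim (fun t => exp (- g t)) F (locally 0) <-> forall M, F (fun t => M < g t).
Proof.
  rewrite filterlim_locally. split.
  - intros H M.
    apply (filter_imp (fun t => ball 0 (mkposreal _ (exp_pos (- M))) (exp (- g t)))); [| apply H].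
    intros t Ht. change (Rabs (exp (- g t) - 0) < exp (- M)) in Ht.
    rewrite Rminus_0_r, Rabs_pos_eq in Ht by (left; apply exp_pos).
    apply exp_lt_inv in Ht. lra.
  - intros H eps. apply (filter_imp (fun t => - ln eps < g t)); [| apply H].
    intros t Ht. change (Rabs (exp (- g t) - 0) < eps).
    rewrite Rminus_0_r, Rabs_pos_eq by (left; apply exp_pos).
    rewrite <- (exp_ln eps (cond_pos eps)). apply exp_increasing. lra.
Qed.

Section Kappa.

Variable p : nat -> R.
Hypothesis p_ge0 : forall n, 0 <= p (S n).
Hypothesis p_sum : is_series (fun n => p (S n)) 1.
Hypothesis p_mean : ex_series (fun n => INR (S n) * p (S n)).

Definition Q1_partial (N : nat) : R := sum_n (fun n => INR (S n) * p (S n)) N.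

Lemma is_series_Q1 : is_series (fun n => INR (S n) * p (S n)) (Q1 p).
Proof. exact (Series_correct _ p_mean). Qed.

Lemma Q1_partial_le N : Q1_partial N <= Q1 p.
Proof.
  apply sum_n_le_is_series; [| exact is_series_Q1].
  intro n. apply Rmult_le_pos; [apply pos_INR | apply p_ge0].
Qed.

Lemma Q1_ge_1 : 1 <= Q1 p.
Proof.
  refine (is_series_le _ _ _ _ _ p_sum is_series_Q1). intro n.
  generalize (p_ge0 n) (le_INR 1 (S n) ltac:(lia)). change (INR 1) with 1. nra.
Qed.

Lemma p_le_1 n : p (S n) <= 1.
Proof.
  apply Rle_trans with (sum_n (fun n => p (S n)) n).
  - rewrite sum_n_Reals. destruct n; [simpl; lra |]. simpl.
    generalize (cond_pos_sum (fun n => p (S n)) n p_ge0). lra.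
  - exact (sum_n_le_is_series _ _ n p_ge0 p_sum).
Qed.

Lemma Qgf_eq_PSeries z : Qgf p z = z * PSeries (fun n => p (S n)) z.
Proof.
  unfold Qgf, PSeries. rewrite <- (Series_scal_l z). apply Series_ext. intro n.
  simpl. ring.
Qed.

Lemma is_series_Qgf z : Rabs z <= 1 -> is_series (fun n => p (S n) * z ^ S n) (Qgf p z).
Proof.
  intro Hz. apply Series_correct.
  apply (@ex_series_le R_AbsRing R_CompleteNormedModule _ (fun n => p (S n))).
  - intro n. change (Rabs (p (S n) * z ^ S n) <= p (S n)).
    rewrite Rabs_mult, <- RPow_abs, (Rabs_pos_eq _ (p_ge0 n)).
    generalize (p_ge0 n) (pow_le_1 (Rabs z) (S n) (conj (Rabs_pos z) Hz)). nra.
  - exists 1. exact p_sum.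
Qed.

Lemma continuous_Qgf z : Rabs z < 1 -> continuity_pt (Qgf p) z.
Proof.
  intro Hz. apply continuity_pt_ext with (fun z => z * PSeries (fun n => p (S n)) z).
  { intro y. symmetry. apply Qgf_eq_PSeries. }
  apply continuity_pt_mult; [apply continuity_pt_id |].
  apply PSeries_continuity.
  assert (radius_ge_1 : Rbar_le 1 (CV_radius (fun n => p (S n)))).
  { apply (proj1 (CV_radius_bounded _)). exists 1. intro n.
    rewrite pow1, Rmult_1_r, Rabs_pos_eq by apply p_ge0. apply p_le_1. }
  destruct (CV_radius (fun n => p (S n))); simpl in *; lra.
Qed.

Lemma is_series_one_sub_Qgf z : 0 <= z <= 1 ->
  is_series (fun n => p (S n) * (1 - z ^ S n)) (1 - Qgf p z).
Proof.
  intro Hz. replace (1 - Qgf p z) with (1 * 1 - Qgf p z) by ring.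
  refine (is_series_scal_sub _ _ _ 1 _ _ _ p_sum (is_series_Qgf z _)).
  - intro n. ring.
  - rewrite Rabs_pos_eq; lra.
Qed.

Lemma one_sub_le_one_sub_Qgf z : 0 <= z <= 1 -> 1 - z <= 1 - Qgf p z.
Proof.
  intro Hz. rewrite <- (Rmult_1_r (1 - z)).
  refine (is_series_le _ _ _ _ _ (is_series_scal (1 - z) _ _ p_sum)
    (is_series_one_sub_Qgf z Hz)).
  intro n. change ((1 - z) * p (S n) <= p (S n) * (1 - z ^ S n)).
  generalize (pow_le_pow_of_le_1 z 1 (S n) Hz ltac:(lia)) (p_ge0 n). rewrite pow_1. nra.
Qed.

Lemma is_series_Qgf_defect z : 0 <= z <= 1 ->
  is_series (fun n => p (S n) * ((1 - z) ^ 2 * geom_sum2 (S n) z))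
    ((1 - z) * Q1 p - (1 - Qgf p z)).
Proof.
  intro Hz.
  refine (is_series_scal_sub _ _ _ (1 - z) _ _ _ is_series_Q1
    (is_series_one_sub_Qgf z Hz)).
  intro n. rewrite geom_sum2_eq. ring.
Qed.

Lemma one_sub_Qgf_le_Q1 z : 0 <= z <= 1 -> 1 - Qgf p z <= (1 - z) * Q1 p.
Proof.
  intro Hz. cut (0 <= (1 - z) * Q1 p - (1 - Qgf p z)); [lra |].
  refine (is_series_ge0 _ _ _ (is_series_Qgf_defect z Hz)). intro n.
  apply Rmult_le_pos; [apply p_ge0 |].
  apply Rmult_le_pos; [apply pow2_ge_0 | apply geom_sum2_ge0; lra].
Qed.

Definition Gpartial (N : nat) (z : R) : R := sum_n (fun n => p (S n) * geom_sum2 (S n) z) N.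

Lemma Gpartial_ge0 N z : 0 <= z -> 0 <= Gpartial N z.
Proof.
  intro z_ge0. unfold Gpartial. rewrite sum_n_Reals. apply cond_pos_sum. intro n.
  apply Rmult_le_pos; [apply p_ge0 | apply geom_sum2_ge0, z_ge0].
Qed.

Lemma Gpartial_le_Qgf_defect N z : 0 <= z <= 1 ->
  (1 - z) ^ 2 * Gpartial N z <= (1 - z) * Q1 p - (1 - Qgf p z).
Proof.
  intro Hz.
  replace ((1 - z) ^ 2 * Gpartial N z)
    with (sum_n (fun n => p (S n) * ((1 - z) ^ 2 * geom_sum2 (S n) z)) N).
  - apply sum_n_le_is_series; [| exact (is_series_Qgf_defect z Hz)]. intro n.
    apply Rmult_le_pos; [apply p_ge0 |].
    apply Rmult_le_pos; [apply pow2_ge_0 | apply geom_sum2_ge0; lra].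
  - unfold Gpartial. rewrite !sum_n_Reals, scal_sum. apply sum_eq. intros i _. ring.
Qed.

Lemma Qgf_defect_le_Gpartial N z : 0 <= z <= 1 ->
  (1 - z) * Q1 p - (1 - Qgf p z)
    <= (1 - z) ^ 2 * Gpartial N z + (1 - z) * (Q1 p - Q1_partial N).
Proof.
  intro Hz.
  assert (partial_le : sum_n (fun n => p (S n) * (1 - z ^ S n)) N <= 1 - Qgf p z).
  { apply sum_n_le_is_series; [intro n | exact (is_series_one_sub_Qgf z Hz)].
    generalize (p_ge0 n) (pow_le_1 z (S n) Hz). nra. }
  assert (Gpartial_eq : (1 - z) ^ 2 * Gpartial N z
    = (1 - z) * Q1_partial N - sum_n (fun n => p (S n) * (1 - z ^ S n)) N).
  { unfold Gpartial, Q1_partial. rewrite !sum_n_Reals, !scal_sum, <- minus_sum.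
    apply sum_eq. intros i _.
    transitivity (p (S i) * ((1 - z) ^ 2 * geom_sum2 (S i) z)); [ring |].
    rewrite geom_sum2_eq. ring. }
  lra.
Qed.

Definition kappa_integrand (z : R) : R := Q1 p / (1 - Qgf p z) - 1 / (1 - z).

Lemma kappa_integrand_eq z : 0 <= z < 1 ->
  kappa_integrand z * ((1 - Qgf p z) * (1 - z)) = (1 - z) * Q1 p - (1 - Qgf p z).
Proof.
  intro Hz. assert (Qgf_lt_1 := one_sub_le_one_sub_Qgf z ltac:(lra)).
  unfold kappa_integrand. field. lra.
Qed.

Lemma Gpartial_le_kappa_integrand N z : 0 <= z < 1 -> Gpartial N z / Q1 p <= kappa_integrand z.
Proof.
  intro Hz. set (u := 1 - z). set (D := 1 - Qgf p z).
  assert (u_le_D : u <= D) by exact (one_sub_le_one_sub_Qgf z ltac:(lra)).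
  assert (D_le : D <= u * Q1 p) by exact (one_sub_Qgf_le_Q1 z ltac:(lra)).
  assert (G_le := Gpartial_le_Qgf_defect N z ltac:(lra)). fold u D in G_le.
  assert (G_ge0 := Gpartial_ge0 N z ltac:(lra)).
  assert (Q1_pos := Q1_ge_1).
  apply Rmult_le_reg_r with (Q1 p * (D * u)); [apply Rmult_lt_0_compat; unfold u in *; nra |].
  assert (E := kappa_integrand_eq z Hz). fold u D in E.
  replace (kappa_integrand z * (Q1 p * (D * u))) with (Q1 p * (u * Q1 p - D))
    by (rewrite <- E; ring).
  replace (Gpartial N z / Q1 p * (Q1 p * (D * u))) with (Gpartial N z * D * u)
    by (field; lra).
  assert (Gpartial N z * D * u <= Gpartial N z * (u * Q1 p) * u).
  { apply Rmult_le_compat_r; [unfold u; lra |]. apply Rmult_le_compat_l; lra. }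
  nra.
Qed.

Lemma kappa_integrand_le_Gpartial N z : 0 <= z < 1 ->
  kappa_integrand z <= Gpartial N z + (Q1 p - Q1_partial N) / (1 - z).
Proof.
  intro Hz. set (u := 1 - z). set (D := 1 - Qgf p z).
  assert (u_le_D : u <= D) by exact (one_sub_le_one_sub_Qgf z ltac:(lra)).
  assert (le_G := Qgf_defect_le_Gpartial N z ltac:(lra)). fold u D in le_G.
  assert (tail_ge0 : 0 <= Q1 p - Q1_partial N) by (generalize (Q1_partial_le N); lra).
  assert (G_ge0 := Gpartial_ge0 N z ltac:(lra)).
  apply Rmult_le_reg_r with (D * u); [apply Rmult_lt_0_compat; unfold u in *; lra |].
  assert (E := kappa_integrand_eq z Hz). fold u D in E. rewrite E.
  replace ((Gpartial N z + (Q1 p - Q1_partial N) / u) * (D * u))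
    with (D * (u * Gpartial N z + (Q1 p - Q1_partial N))) by (field; unfold u; lra).
  assert (0 <= (D - u) * (u * Gpartial N z + (Q1 p - Q1_partial N)))
    by (apply Rmult_le_pos;
        [lra | apply Rplus_le_le_0_compat; [apply Rmult_le_pos; unfold u |]; lra]).
  nra.
Qed.

Lemma continuous_kappa_integrand z : 0 <= z < 1 -> continuous kappa_integrand z.
Proof.
  intro Hz. assert (Qgf_lt_1 := one_sub_le_one_sub_Qgf z ltac:(lra)).
  apply continuity_pt_filterlim. unfold kappa_integrand.
  assert (const_cont : forall c, continuity_pt (fun _ => c) z)
    by (intro c; apply continuity_pt_const; intros a b; reflexivity).
  apply continuity_pt_minus; apply continuity_pt_div; try apply const_cont; try lra;
    apply continuity_pt_minus; try apply const_cont.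
  - apply continuous_Qgf. rewrite Rabs_pos_eq; lra.
  - apply continuity_pt_id.
Qed.

Lemma ex_RInt_kappa_integrand x : 0 <= x < 1 -> ex_RInt kappa_integrand 0 x.
Proof.
  intro Hx. apply (@ex_RInt_continuous R_CompleteNormedModule). intros z Hz.
  rewrite Rmin_left, Rmax_right in Hz by lra. apply continuous_kappa_integrand. lra.
Qed.

Definition Gpartial_int (N : nat) (x : R) : R :=
  sum_n (fun n => p (S n) * geom_sum2_prim (S n) x) N.

Lemma is_RInt_Gpartial N x : is_RInt (Gpartial N) 0 x (Gpartial_int N x).
Proof.
  unfold Gpartial, Gpartial_int. induction N as [|N IHN].
  - apply (is_RInt_ext (fun z => scal (p 1%nat) (geom_sum2 1 z))); [intros; now rewrite sum_O |].
    rewrite sum_O. exact (is_RInt_scal _ _ _ _ _ (is_RInt_geom_sum2 1 x)).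
  - apply (is_RInt_ext (fun z => plus (sum_n (fun n => p (S n) * geom_sum2 (S n) z) N)
                                      (scal (p (S (S N))) (geom_sum2 (S (S N)) z))));
      [intros; now rewrite sum_Sn |].
    rewrite sum_Sn.
    exact (is_RInt_plus _ _ _ _ _ _ IHN (is_RInt_scal _ _ _ _ _ (is_RInt_geom_sum2 _ x))).
Qed.

Lemma Gpartial_int_le_RInt N x : 0 <= x < 1 ->
  Gpartial_int N x / Q1 p <= RInt kappa_integrand 0 x.
Proof.
  intro Hx.
  assert (Hi : is_RInt (fun z => Gpartial N z / Q1 p) 0 x (Gpartial_int N x / Q1 p)).
  { apply (is_RInt_ext (fun z => scal (/ Q1 p) (Gpartial N z))); [intros; apply Rmult_comm |].
    replace (Gpartial_int N x / Q1 p) with (scal (/ Q1 p) (Gpartial_int N x))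
      by apply Rmult_comm.
    exact (is_RInt_scal _ _ _ _ _ (is_RInt_Gpartial N x)). }
  rewrite <- (is_RInt_unique _ _ _ _ Hi).
  apply RInt_le; [lra | eexists; exact Hi | apply ex_RInt_kappa_integrand; lra |].
  intros z Hz. apply Gpartial_le_kappa_integrand. lra.
Qed.

Lemma RInt_le_Gpartial_int N q : 0 < q < 1 ->
  RInt kappa_integrand 0 (1 - q) <= Gpartial_int N (1 - q) + (Q1 p - Q1_partial N) / q.
Proof.
  intro Hq. set (c := (Q1 p - Q1_partial N) / q).
  assert (c_ge0 : 0 <= c) by (apply Rdiv_le_0_compat; [generalize (Q1_partial_le N) |]; lra).
  assert (Hi : is_RInt (fun z => Gpartial N z + c) 0 (1 - q)
                       (Gpartial_int N (1 - q) + (1 - q - 0) * c))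
    by exact (is_RInt_plus _ _ _ _ _ _ (is_RInt_Gpartial N (1 - q)) (is_RInt_const 0 (1 - q) c)).
  apply Rle_trans with (Gpartial_int N (1 - q) + (1 - q - 0) * c).
  - rewrite <- (is_RInt_unique _ _ _ _ Hi).
    apply RInt_le; [lra | apply ex_RInt_kappa_integrand; lra | eexists; exact Hi |].
    intros z Hz. apply Rle_trans with (1 := kappa_integrand_le_Gpartial N z ltac:(lra)).
    apply Rplus_le_compat_l. unfold c, Rdiv.
    apply Rmult_le_compat_l; [generalize (Q1_partial_le N); lra |].
    apply Rinv_le_contravar; lra.
  - nra.
Qed.

Definition klogk_partial (N : nat) : R :=
  sum_n (fun n => p (S n) * INR (S n) * ln (INR (S n))) N.

Lemma Gpartial_int_bounds N x : 0 <= x <= 1 ->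
  x ^ S N * (klogk_partial N - Q1 p) <= Gpartial_int N x <= klogk_partial N.
Proof.
  intro Hx.
  assert (term_bounds : forall n, (n <= N)%nat ->
    x ^ S N * (p (S n) * INR (S n) * ln (INR (S n)) - INR (S n) * p (S n))
      <= p (S n) * geom_sum2_prim (S n) x <= p (S n) * INR (S n) * ln (INR (S n))).
  { intros n Hn. set (k := INR (S n)).
    destruct (geom_sum2_prim_klogk_bounds (S n) (S N) x ltac:(lia) Hx) as [lower upper].
    split.
    - apply Rle_trans with (p (S n) * (x ^ S N * (k * ln k - k))); [right; ring |].
      apply Rmult_le_compat_l; [apply p_ge0 | exact lower].
    - apply Rle_trans with (p (S n) * (k * ln k)); [| right; ring].
      apply Rmult_le_compat_l; [apply p_ge0 | exact upper]. }
  split.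
  - apply Rle_trans with (x ^ S N * (klogk_partial N - Q1_partial N)).
    + apply Rmult_le_compat_l; [apply pow_le; lra |]. generalize (Q1_partial_le N); lra.
    + unfold Gpartial_int, klogk_partial, Q1_partial.
      rewrite !sum_n_Reals, <- minus_sum, scal_sum.
      apply sum_Rle. intros n Hn. rewrite Rmult_comm. apply term_bounds, Hn.
  - unfold Gpartial_int, klogk_partial. rewrite !sum_n_Reals.
    apply sum_Rle. intros n Hn. apply term_bounds, Hn.
Qed.

Lemma klogk_partial_incr N : klogk_partial N <= klogk_partial (S N).
Proof.
  assert (0 <= ln (INR (S (S N))))
    by (rewrite <- ln_1; apply ln_le; [lra | apply (le_INR 1); lia]).
  assert (0 <= p (S (S N)) * INR (S (S N)) * ln (INR (S (S N))))
    by (apply Rmult_le_pos; [apply Rmult_le_pos; [apply p_ge0 | apply pos_INR] | assumption]).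
  unfold klogk_partial. rewrite sum_Sn. change (plus ?a ?b) with (a + b). lra.
Qed.

Lemma klogk_partial_le_Q1_mul_RInt N x : 0 <= x < 1 ->
  x ^ S N * (klogk_partial N - Q1 p) <= Q1 p * RInt kappa_integrand 0 x.
Proof.
  intro Hx. destruct (Gpartial_int_bounds N x ltac:(lra)) as [lower _].
  assert (upper := Gpartial_int_le_RInt N x Hx).
  assert (Q1_pos := Q1_ge_1).
  replace (Gpartial_int N x) with (Q1 p * (Gpartial_int N x / Q1 p)) in lower
    by (field; lra).
  apply Rle_trans with (1 := lower). apply Rmult_le_compat_l; lra.
Qed.

Lemma RInt_le_klogk_partial N q : 0 < q < 1 ->
  RInt kappa_integrand 0 (1 - q) <= klogk_partial N + (Q1 p - Q1_partial N) / q.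
Proof.
  intro Hq. apply Rle_trans with (1 := RInt_le_Gpartial_int N q Hq).
  destruct (Gpartial_int_bounds N (1 - q) ltac:(lra)) as [_ upper]. lra.
Qed.

Lemma klogk_partial_unbounded :
  (forall M, at_right 0 (fun q => M < RInt kappa_integrand 0 (1 - q))) ->
  is_lim_seq klogk_partial p_infty.
Proof.
  intro RInt_unbounded.
  apply is_lim_seq_p_infty_of_unbounded; [exact klogk_partial_incr |]. intro M.
  destruct (RInt_unbounded (M + 1)) as [d Hd].
  set (q := Rmin d 1 / 2).
  assert (Hq : 0 < q < 1).
  { unfold q. generalize (Rmin_r d 1) (Rmin_glb_lt d 1 0 (cond_pos d) Rlt_0_1). lra. }
  assert (q_near_0 : ball 0 d q).
  { change (Rabs (q - 0) < d). rewrite Rminus_0_r, Rabs_pos_eq by lra.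
    unfold q. generalize (Rmin_l d 1) (cond_pos d). lra. }
  specialize (Hd q q_near_0 (proj1 Hq)). cbv beta in Hd.
  destruct (proj2 (is_lim_seq_spec (sum_n _) (Q1 p)) is_series_Q1 (mkposreal q (proj1 Hq)))
    as [N HN].
  specialize (HN N (le_n N)). change (Rabs (Q1_partial N - Q1 p) < q) in HN.
  exists N.
  assert ((Q1 p - Q1_partial N) / q < 1)
    by (apply Rlt_div_l; [lra | apply Rabs_def2 in HN; lra]).
  generalize (RInt_le_klogk_partial N q Hq). lra.
Qed.

Lemma RInt_kappa_integrand_unbounded :
  is_lim_seq klogk_partial p_infty ->
  forall M, at_right 0 (fun q => M < RInt kappa_integrand 0 (1 - q)).
Proof.
  intros klogk_lim M. assert (Q1_pos := Q1_ge_1).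
  destruct (proj2 (is_lim_seq_spec _ _) klogk_lim (Q1 p * (2 * Rabs M + 1))) as [N HN].
  specialize (HN N (le_n N)).
  assert (SN_pos : 0 < INR (S N)) by apply lt_0_INR, Nat.lt_0_succ.
  exists (mkposreal _ (Rinv_0_lt_compat _ (Rmult_lt_0_compat 2 _ Rlt_0_2 SN_pos))).
  intros q q_near_0 q_pos. change (Rabs (q - 0) < / (2 * INR (S N))) in q_near_0.
  rewrite Rminus_0_r, Rabs_pos_eq in q_near_0 by lra.
  assert (Nq_le : INR (S N) * q <= 1 / 2).
  { replace (1 / 2) with (INR (S N) * / (2 * INR (S N))) by (field; lra).
    apply Rmult_le_compat_l; lra. }
  assert (q_lt_1 : q < 1) by (generalize (le_INR 1 (S N) ltac:(lia)); simpl INR at 1; nra).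
  assert (half_le : 1 / 2 <= (1 - q) ^ S N)
    by (generalize (bernoulli_sub q (S N) ltac:(lra)); lra).
  assert (lower := klogk_partial_le_Q1_mul_RInt N (1 - q) ltac:(lra)).
  assert (0 <= Q1 p * Rabs M) by (apply Rmult_le_pos; [lra | apply Rabs_pos]).
  assert (gap : 2 * (Q1 p * Rabs M) < klogk_partial N - Q1 p) by nra.
  assert (Q1 p * Rabs M < Q1 p * RInt kappa_integrand 0 (1 - q)).
  { apply Rlt_le_trans with (2 := lower).
    apply Rlt_le_trans with (1 / 2 * (klogk_partial N - Q1 p)); [lra |].
    apply Rmult_le_compat_r; lra. }
  generalize (Rle_abs M). nra.
Qed.

End Kappa.

Theorem lemma3p7 (p : nat -> R)
  (hpos : forall k, (1 <= k)%nat -> 0 <= p k)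
  (hsum : is_series (fun n => p (S n)) 1)
  (hQ1 : ex_series (fun n => INR (S n) * p (S n))) :
  filterlim (kappa p) (at_right 0) (locally 0) <->
  is_lim_seq (sum_n (fun n => p (S n) * INR (S n) * ln (INR (S n)))) p_infty.
Proof.
  assert (p_ge0 : forall n, 0 <= p (S n)) by (intro n; apply hpos; lia).
  change (filterlim (fun q => exp (- RInt (kappa_integrand p) 0 (1 - q))) (at_right 0) (locally 0)
    <-> is_lim_seq (klogk_partial p) p_infty).
  rewrite filterlim_exp_opp_locally_0 by apply at_right_proper_filter.
  split; [apply klogk_partial_unbounded | apply RInt_kappa_integrand_unbounded]; assumption.
Qed.
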